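(* For the FSPG iterates $(\mathbf{w}^{(k)})$, for every $k\ge0$, $$\Big\|\nabla\sum_{l=1}^L\tilde g_l(\mathbf{w}^{(k+1)},\mu^{(k+2)})-\nabla\sum_{l=1}^L\tilde g_l(\mathbf{w}^{(k)},\mu^{(k+1)})\Big\|_2\le\frac{\lambda_{\max}(\bar{\mathbf{X}}^\top\bar{\mathbf{X}})}{2\mu^{(k+1)}}\|\mathbf{w}^{(k+1)}-\mathbf{w}^{(k)}\|_2+\frac{n\sqrt{\lambda_{\max}(\bar{\mathbf{X}}^\top\bar{\mathbf{X}})}}{2}\cdot\frac{\mu^{(k+1)}-\mu^{(k+2)}}{\mu^{(k+2)}},$$ where $\nabla$ denotes the gradient with respect to $\mathbf{w}$.
   Context: Data: $L$ clients; client $l$ holds $y^{(l)}_1,\dots,y^{(l)}_{M_l}\in\mathbb{R}$ and $\bar{\mathbf{x}}^{(l)}_i=[(\mathbf{x}^{(l)}_i)^\top,1]^\top\in\mathbb{R}^{P+1}$; $n=\sum_l M_l$; $\bar{\mathbf{X}}\in\mathbb{R}^{(P+1)\times n}$ has all $\bar{\mathbf{x}}^{(l)}_i$ as columns; $\lambda_{\max}$ is the largest eigenvalue. Quantile level $\tau\in(0,1)$. Smoothing: $f(r,\mu)=|r|$ if $|r|\ge\mu$, $f(r,\mu)=\frac{r^2}{2\mu}+\frac{\mu}{2}$ if $|r|<\mu$; $\tilde g_l(\mathbf{w},\mu)=\frac12\sum_{i} f(y^{(l)}_i-(\bar{\mathbf{x}}^{(l)}_i)^\top\mathbf{w},\mu)+(\tau-\frac12)\sum_i(y^{(l)}_i-(\bar{\mathbf{x}}^{(l)}_i)^\top\mathbf{w})$.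 Penalty: $\lambda>0$, $P_{\lambda,\gamma}(\mathbf{w})=\sum_{p=1}^{P}g_{\lambda,\gamma}(w_p)$ with $g_{\lambda,\gamma}$ either MCP ($\gamma\ge1$): $\lambda|t|-\frac{t^2}{2\gamma}$ for $|t|\le\gamma\lambda$, $\frac{\gamma\lambda^2}{2}$ otherwise; or SCAD ($\gamma\ge2$): $\lambda|t|$ for $|t|\le\lambda$, $-\frac{t^2-2\gamma\lambda|t|+\lambda^2}{2(\gamma-1)}$ for $\lambda<|t|\le\gamma\lambda$, $\frac{(\gamma+1)\lambda^2}{2}$ for $|t|>\gamma\lambda$. FSPG algorithm: choose $\mathbf{w}^{(0)}\in\mathbb{R}^{P+1}$, $c>0$, $\beta>0$, $d\in(0,1)$; set $\sigma^{(k)}=ck^d$ and $\mu^{(k)}=\beta/k^d$ for $k\ge1$; for $k=0,1,2,\dots$ let $\mathbf{w}^{(k+1)}$ be a minimizer over $\mathbf{w}\in\mathbb{R}^{P+1}$ of $\sum_{l=1}^L\langle\nabla_{\mathbf{w}}\tilde g_l(\mathbf{w}^{(k)},\mu^{(k+1)}),\mathbf{w}-\mathbf{w}^{(k)}\rangle+nP_{\lambda,\gamma}(\mathbf{w})+\frac{\sigma^{(k+1)}}{2}\|\mathbf{w}-\mathbf{w}^{(k)}\|_2^2$. *)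

From HB Require Import structures.
From mathcomp Require Import all_boot all_order all_algebra.
From mathcomp Require Import all_classical all_reals all_analysis.
Set Implicit Arguments. Unset Strict Implicit. Unset Printing Implicit Defensive.
Import Order.TTheory GRing.Theory Num.Theory.
Import numFieldNormedType.Exports.
Local Open Scope ring_scope.
Local Open Scope classical_set_scope.

Section FSPG.
Variable R : realType.

Definition dotv m (a b : 'rV[R]_m) : R := \sum_(j < m) a 0 j * b 0 j.
Definition norm2 m (a : 'rV[R]_m) : R := Num.sqrt (\sum_(j < m) a 0 j ^+ 2).

Definition grad m (F : 'rV[R]_m -> R) (w : 'rV[R]_m) : 'rV[R]_m :=
  \row_(j < m) ('D_(delta_mx 0 j) F w).

Definition lambda_max m (A : 'M[R]_m) : R := sup [set a : R | eigenvalue A a].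

Definition fsmooth (r mu : R) : R :=
  if mu <= `|r| then `|r| else r ^+ 2 / (2 * mu) + mu / 2.

(* augmented feature vector xbar = [x^T, 1]^T, stored as a row of size P+1;
   the first P coordinates are the features, the last one is the intercept. *)
Definition xbar P (x : 'rV[R]_P) : 'rV[R]_(P + 1) := row_mx x (const_mx 1).

Definition gtilde (tau : R) P Ml (y : 'I_Ml -> R) (x : 'I_Ml -> 'rV[R]_P)
  (w : 'rV[R]_(P + 1)) (mu : R) : R :=
  2^-1 * (\sum_(i < Ml) fsmooth (y i - dotv (xbar (x i)) w) mu)
  + (tau - 2^-1) * \sum_(i < Ml) (y i - dotv (xbar (x i)) w).

Definition Gsum (tau : R) P L (M : 'I_L -> nat) (y : forall l, 'I_(M l) -> R)
  (x : forall l, 'I_(M l) -> 'rV[R]_P) (w : 'rV[R]_(P + 1)) (mu : R) : R :=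
  \sum_(l < L) gtilde tau (y l) (x l) w mu.

(* Xbar: the (P+1) x n matrix whose columns are all the xbar_i^(l);
   columns are indexed by the pairs (l, i) *)
Definition sample_idx L (M : 'I_L -> nat) := {l : 'I_L & 'I_(M l)}.
Definition Xbar P L (M : 'I_L -> nat) (x : forall l, 'I_(M l) -> 'rV[R]_P)
  : 'M[R]_(P + 1, #|{: sample_idx M}|) :=
  \matrix_(j, c) xbar (x (tag (enum_val c)) (tagged (enum_val c))) 0 j.

Definition mcp (lam gam t : R) : R :=
  if `|t| <= gam * lam then lam * `|t| - t ^+ 2 / (2 * gam) else gam * lam ^+ 2 / 2.
Definition scad (lam gam t : R) : R :=
  if `|t| <= lam then lam * `|t|
  else if `|t| <= gam * lam then
    - (t ^+ 2 - 2 * gam * lam * `|t| + lam ^+ 2) / (2 * (gam - 1))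
  else (gam + 1) * lam ^+ 2 / 2.

Inductive penalty_kind := MCP | SCAD.
Definition gpen (k : penalty_kind) := match k with MCP => mcp | SCAD => scad end.
Definition gamma_ok (k : penalty_kind) (gam : R) :=
  match k with MCP => 1 <= gam | SCAD => 2 <= gam end.

(* P_{lambda,gamma}(w) = sum over the P feature coordinates (intercept excluded) *)
Definition Ppen (k : penalty_kind) (lam gam : R) P (w : 'rV[R]_(P + 1)) : R :=
  \sum_(p < P) gpen k lam gam (w 0 (lshift 1 p)).

(* parameter schedules: sigma^(k) = c k^d, mu^(k) = beta / k^d  (k >= 1) *)
Definition sigma_k (c d : R) (k : nat) : R := c * (k%:R `^ d).
Definition mu_k (beta d : R) (k : nat) : R := beta / (k%:R `^ d).

(* FSPG subproblem objective at step k (defining w^(k+1)) *)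
Definition fspg_obj (tau : R) (k : penalty_kind) (lam gam c beta d : R)
  P L (M : 'I_L -> nat) (y : forall l, 'I_(M l) -> R)
  (x : forall l, 'I_(M l) -> 'rV[R]_P) (wk : 'rV[R]_(P + 1)) (it : nat)
  (w : 'rV[R]_(P + 1)) : R :=
  \sum_(l < L) dotv (grad (fun v => gtilde tau (y l) (x l) v (mu_k beta d it.+1)) wk) (w - wk)
  + (\sum_(l < L) M l)%:R * Ppen k lam gam w
  + sigma_k c d it.+1 / 2 * norm2 (w - wk) ^+ 2.

End FSPG.

From HB Require Import structures.
From mathcomp Require Import all_boot all_order all_algebra.
From mathcomp Require Import all_classical all_reals all_analysis.
From mathcomp Require Import ring lra.
Import Order.TTheory GRing.Theory Num.Theory.
Import numFieldNormedType.Exports.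
Set Implicit Arguments. Unset Strict Implicit. Unset Printing Implicit Defensive.
Local Open Scope ring_scope.

(* The gradient of the smoothed loss at (w, mu) is -1/2 times the vector of
   derivatives f'(r_i, mu) of the smoothed absolute value at the residuals r_i,
   mapped through Xbar, plus a constant.  Since f'(., mu) is 1/mu-Lipschitz and
   moves by at most (mu1 - mu2) / mu2 when mu decreases from mu1 to mu2, splitting
   the change of these derivatives into a change of w at fixed mu^(k+1) and a
   change of mu at fixed w^(k+1), and bounding the operator norms of Xbar and
   Xbar^T by sqrt(lambda_max) (Rayleigh quotient), yields the two terms. *)

Section SmoothedAbs.
Variable R : realType.
Implicit Types a b r s mu : R.

Definition dfsmooth r mu : R :=
  if mu <= `|r| then (if 0 <= r then 1 else -1) else r / mu.

Lemma fsmoothZ mu a : 0 < mu -> fsmooth (mu * a) mu = mu * fsmooth a 1.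
Proof.
move=> mu0; rewrite /fsmooth normrM (gtr0_norm mu0) -{1}[mu]mulr1 ler_pM2l //.
by case: ifP => _ //; field; rewrite gt_eqF.
Qed.

Lemma dfsmoothZ mu a : 0 < mu -> dfsmooth (mu * a) mu = dfsmooth a 1.
Proof.
move=> mu0; rewrite /dfsmooth normrM (gtr0_norm mu0) -{1}[mu]mulr1 ler_pM2l //.
by rewrite pmulr_rge0 // divr1; case: ifP => _ //; field; rewrite gt_eqF.
Qed.

Lemma fsmooth1_taylor a b :
  `|fsmooth b 1 - fsmooth a 1 - dfsmooth a 1 * (b - a)| <= (b - a) ^+ 2 / 2.
Proof.
rewrite /fsmooth /dfsmooth !mulr1 !divr1 ler_norml.
have := sqr_ge0 (b - a); rewrite expr2 => sq.
case: (lerP 0 a) => ha; case: (lerP 0 b) => hb;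
  rewrite ?(ger0_norm ha) ?(ltr0_norm ha) ?(ger0_norm hb) ?(ltr0_norm hb);
  by case: ifP => h1; case: ifP => h2; rewrite /= ?expr2; apply/andP; split; nra.
Qed.

Lemma dfsmooth1_lipschitz a b : `|dfsmooth b 1 - dfsmooth a 1| <= `|b - a|.
Proof.
rewrite /dfsmooth !divr1 ler_norml.
have := ler_norm (b - a); have := ler_norm (a - b); rewrite distrC.
case: (lerP 0 a) => ha; case: (lerP 0 b) => hb;
  rewrite ?(ger0_norm ha) ?(ltr0_norm ha) ?(ger0_norm hb) ?(ltr0_norm hb);
  by case: ifP => h1; case: ifP => h2; rewrite /= => n1 n2; apply/andP; split; lra.
Qed.

Lemma fsmooth_taylor mu r s : 0 < mu ->
  `|fsmooth s mu - fsmooth r mu - dfsmooth r mu * (s - r)| <= (s - r) ^+ 2 / (2 * mu).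
Proof.
move=> mu0; have mu_neq0 : mu != 0 by rewrite gt_eqF.
have [a ->] : exists a, r = mu * a by exists (r / mu); rewrite mulrC divfK.
have [b ->] : exists b, s = mu * b by exists (s / mu); rewrite mulrC divfK.
rewrite !fsmoothZ // dfsmoothZ //.
have -> : mu * fsmooth b 1 - mu * fsmooth a 1 - dfsmooth a 1 * (mu * b - mu * a)
  = mu * (fsmooth b 1 - fsmooth a 1 - dfsmooth a 1 * (b - a)) by ring.
have -> : (mu * b - mu * a) ^+ 2 / (2 * mu) = mu * ((b - a) ^+ 2 / 2) by field.
by rewrite normrM (gtr0_norm mu0) ler_pM2l //; exact: fsmooth1_taylor.
Qed.

Lemma dfsmooth_lipschitz mu r s : 0 < mu ->
  `|dfsmooth s mu - dfsmooth r mu| <= `|s - r| / mu.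
Proof.
move=> mu0; have mu_neq0 : mu != 0 by rewrite gt_eqF.
have [a ->] : exists a, r = mu * a by exists (r / mu); rewrite mulrC divfK.
have [b ->] : exists b, s = mu * b by exists (s / mu); rewrite mulrC divfK.
rewrite !dfsmoothZ // -mulrBr normrM (gtr0_norm mu0) mulrAC divff // mul1r.
exact: dfsmooth1_lipschitz.
Qed.

Lemma dfsmooth_mu_lipschitz mu1 mu2 r : 0 < mu2 -> mu2 <= mu1 ->
  `|dfsmooth r mu2 - dfsmooth r mu1| <= (mu1 - mu2) / mu2.
Proof.
move=> mu2_gt0 mu21; have mu1_gt0 : 0 < mu1 by exact: lt_le_trans mu21.
have ? : mu1 / mu1 = 1 by rewrite divff // gt_eqF.
have ? : mu2 / mu2 = 1 by rewrite divff // gt_eqF.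
have ? : 0 < mu1^-1 by rewrite invr_gt0.
have ? : 0 < mu2^-1 by rewrite invr_gt0.
have ? : mu1^-1 <= mu2^-1 by rewrite lef_pV2 ?posrE.
rewrite /dfsmooth; case: (lerP 0 r) => r0; rewrite ?(ger0_norm r0) ?(ltr0_norm r0);
  by case: ifPn => h1; case: ifPn => h2; rewrite -?ltNge in h1 h2;
     rewrite /= ler_norml; apply/andP; split; nra.
Qed.

End SmoothedAbs.

Lemma derive_quadratic_remainder (R : realFieldType) (V : normedModType R)
    (F : V -> R) (a v : V) (g K : R) :
  (forall h, `|F (h *: v + a) - F a - h * g| <= K * h ^+ 2) -> 'D_v F a = g.
Proof.
move=> remF; have K_ge0 : 0 <= K.
  by have := remF 1; rewrite expr1n mulr1; exact: le_trans.
apply: cvg_lim => //; apply/cvgrPdist_lt => e e_gt0.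
have eK_gt0 : 0 < e / (K + 1) by rewrite divr_gt0 // ltr_wpDl.
near=> h.
have h_neq0 : h != 0 by near: h; exact: nbhs_dnbhs_neq.
have h_small : `|h| < e / (K + 1) by near: h; exact: dnbhs0_lt.
have h_gt0 : 0 < `|h| by rewrite normr_gt0.
rewrite /= /shift.
have -> : g - h^-1 *: (F (h *: v + a) - F a)
          = - h^-1 * (F (h *: v + a) - F a - h * g) by rewrite /GRing.scale /=; field.
rewrite normrM normrN normfV ltr_pdivrMl // (le_lt_trans (remF h)) //.
rewrite -(real_normK (num_real h)) expr2.
rewrite ltr_pdivlMr ?ltr_wpDl // in h_small; nra.
Unshelve. all: by end_near.
Qed.

Section Euclidean.
Variables (R : realType) (m : nat).
Implicit Types (a b u v : 'rV[R]_m) (t : R).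

Lemma dotv_mulmx a b : dotv a b = (a *m b^T) 0 0.
Proof. by rewrite /dotv mxE; apply: eq_bigr => j _; rewrite mxE. Qed.

Lemma dotvC a b : dotv a b = dotv b a.
Proof. by apply: eq_bigr => j _; rewrite mulrC. Qed.

Lemma dotvDl a b v : dotv (a + b) v = dotv a v + dotv b v.
Proof. by rewrite /dotv -big_split; apply: eq_bigr => j _; rewrite mxE mulrDl. Qed.

Lemma dotvDr a u v : dotv a (u + v) = dotv a u + dotv a v.
Proof. by rewrite dotvC dotvDl !(dotvC a). Qed.

Lemma dotvBl a b v : dotv (a - b) v = dotv a v - dotv b v.
Proof. by rewrite /dotv -sumrB; apply: eq_bigr => j _; rewrite !mxE mulrBl. Qed.

Lemma dotvZl t a v : dotv (t *: a) v = t * dotv a v.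
Proof. by rewrite /dotv mulr_sumr; apply: eq_bigr => j _; rewrite mxE mulrA. Qed.

Lemma dotvZr a t v : dotv a (t *: v) = t * dotv a v.
Proof. by rewrite dotvC dotvZl dotvC. Qed.

Lemma dotv0r a : dotv a 0 = 0.
Proof. by rewrite /dotv big1 // => j _; rewrite mxE mulr0. Qed.

Lemma dotv_expand a b t :
  dotv (a + t *: b) (a + t *: b) = dotv a a + 2 * t * dotv a b + t ^+ 2 * dotv b b.
Proof.
rewrite /dotv !mulr_sumr -!big_split; apply: eq_bigr => j _.
by rewrite !mxE /=; ring.
Qed.

Lemma dotvv_ge0 a : 0 <= dotv a a.
Proof. by apply: sumr_ge0 => j _; rewrite -expr2 sqr_ge0. Qed.

Lemma dotvv_eq0 a : (dotv a a == 0) = (a == 0).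
Proof.
apply/idP/eqP => [|->]; last by rewrite dotv0r.
rewrite psumr_eq0 => [/allP a0|j _]; last by rewrite -expr2 sqr_ge0.
by apply/rowP => j; have := a0 j (mem_index_enum j); rewrite mxE mulf_eq0 orbb => /eqP.
Qed.

Lemma sqr_entry_le_dotvv a j : a 0 j ^+ 2 <= dotv a a.
Proof.
rewrite /dotv (bigD1 j) //= -expr2 lerDl.
by apply: sumr_ge0 => i _; rewrite -expr2 sqr_ge0.
Qed.

Lemma norm2E a : norm2 a = Num.sqrt (dotv a a).
Proof. by congr Num.sqrt; apply: eq_bigr => j _; rewrite expr2. Qed.

Lemma norm2_sqr a : norm2 a ^+ 2 = dotv a a.
Proof. by rewrite norm2E sqr_sqrtr // dotvv_ge0. Qed.

Lemma norm2_ge0 a : 0 <= norm2 a.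
Proof. exact: sqrtr_ge0. Qed.

Lemma dotv_sqr_le a b : dotv a b ^+ 2 <= dotv a a * dotv b b.
Proof.
have [->|b_neq0] := eqVneq b 0; first by rewrite !dotv0r expr0n mulr0.
have bb_gt0 : 0 < dotv b b by rewrite lt_def dotvv_eq0 b_neq0 dotvv_ge0.
(* minimise the quadratic t |-> |a + t b|^2 at t = - <a, b> / |b|^2 *)
have := dotvv_ge0 (a + (- (dotv a b / dotv b b)) *: b); rewrite dotv_expand.
have -> : dotv a a + 2 * - (dotv a b / dotv b b) * dotv a b
          + (- (dotv a b / dotv b b)) ^+ 2 * dotv b b
        = dotv a a - dotv a b ^+ 2 / dotv b b by field; rewrite gt_eqF.
by rewrite subr_ge0 ler_pdivrMr // mulrC.
Qed.

Lemma dotv_le_norm2 a b : dotv a b <= norm2 a * norm2 b.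
Proof.
rewrite (le_trans (ler_norm _)) // -sqrtr_sqr !norm2E -sqrtrM ?dotvv_ge0 //.
by rewrite ler_sqrt ?mulr_ge0 ?dotvv_ge0 // dotv_sqr_le.
Qed.

Lemma norm2D a b : norm2 (a + b) <= norm2 a + norm2 b.
Proof.
rewrite -ler_sqr ?nnegrE ?addr_ge0 ?norm2_ge0 //.
rewrite -[b]scale1r norm2_sqr dotv_expand scale1r sqrrD !norm2_sqr expr1n !mul1r mulr1.
by rewrite lerD2r lerD2l mulr2n mulrDl !mul1r lerD ?dotv_le_norm2.
Qed.

Lemma norm2Z t a : norm2 (t *: a) = `|t| * norm2 a.
Proof.
rewrite /norm2 -sqrtr_sqr -sqrtrM ?sqr_ge0 // mulr_sumr.
by congr Num.sqrt; apply: eq_bigr => j _; rewrite mxE exprMn.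
Qed.

Lemma norm2_le_entrywise a b : (forall j, `|a 0 j| <= `|b 0 j|) -> norm2 a <= norm2 b.
Proof.
move=> ab; rewrite ler_sqrt ?sumr_ge0 // => [|j _]; last exact: sqr_ge0.
apply: ler_sum => j _.
by rewrite -(real_normK (num_real (a 0 j))) -(real_normK (num_real (b 0 j))) ler_sqr ?nnegrE.
Qed.

Lemma norm2_le_dim a e : (forall j, `|a 0 j| <= e) -> norm2 a <= m%:R * e.
Proof.
move=> ae; case: m a ae => [|k] a ae; first by rewrite /norm2 big_ord0 sqrtr0 mul0r.
have e_ge0 : 0 <= e by exact: le_trans (ae 0).
have sqrt_le : Num.sqrt k.+1%:R <= k.+1%:R :> R.
  rewrite -{2}[k.+1%:R]sqr_sqrtr ?ler0n // ler_eXnr //.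
  by rewrite -[X in X <= _]sqrtr1 ler_sqrt // ler1n.
apply: le_trans (ler_wpM2r e_ge0 sqrt_le).
rewrite -[e]ger0_norm // -sqrtr_sqr -sqrtrM ?ler0n // ler_sqrt ?mulr_ge0 ?sqr_ge0 //.
rewrite mulr_natl -[X in _ *+ X]card_ord -sumr_const; apply: ler_sum => j _.
by rewrite -(real_normK (num_real (a 0 j))) ler_sqr ?nnegrE.
Qed.

End Euclidean.

Section QuadraticForm.
Variable R : realType.

Definition qform m (A : 'M[R]_m) (u : 'rV[R]_m) : R := dotv (u *m A) u.

Section Form.
Variables (m : nat) (A : 'M[R]_m).
Implicit Types (u v : 'rV[R]_m).

Lemma qform_continuous : continuous (qform A).
Proof.
have cont_add := @add_continuous R^o.
apply: continuous_big => // j _ u.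
apply: continuousM; last exact: coord_continuous.
have -> : (fun u : 'rV[R]_m => (u *m A) 0 j) = fun u => \sum_i u 0 i * A i j.
  by apply/funext => v; rewrite mxE.
apply: continuous_big => // i _ v.
by apply: continuousM; [exact: coord_continuous | exact: cst_continuous].
Qed.

Lemma qformZ (t : R) u : qform A (t *: u) = t ^+ 2 * qform A u.
Proof.
rewrite /qform -scalemxAl /dotv mulr_sumr; apply: eq_bigr => j _.
by rewrite !mxE; ring.
Qed.

Lemma qformD u v : A^T = A ->
  qform A (u + v) = qform A u + 2 * dotv (u *m A) v + qform A v.
Proof.
move=> A_sym; have vAu : dotv (v *m A) u = dotv (u *m A) v.
  rewrite !dotv_mulmx; transitivity ((v *m A *m u^T)^T 0 0); first by rewrite [RHS]mxE.
  by rewrite !trmx_mul trmxK A_sym mulmxA.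
by rewrite /qform mulmxDl dotvDl !dotvDr vAu; ring.
Qed.

Lemma psd_qform_eq0 u : A^T = A -> (forall v, 0 <= qform A v) ->
  qform A u = 0 -> u *m A = 0.
Proof.
move=> A_sym A_psd uAu0; set v := u *m A.
set s := dotv v v; set c := qform A v.
have c_ge0 : 0 <= c := A_psd v.
have s_ge0 : 0 <= s := dotvv_ge0 v.
have quad_ge0 t : 0 <= 2 * t * s + t ^+ 2 * c.
  by have := A_psd (u + t *: v); rewrite qformD // uAu0 qformZ add0r dotvZr mulrA.
set t := s / (c + 1).
have t_ge0 : 0 <= t by rewrite divr_ge0 ?addr_ge0.
have s_eq : s = t * (c + 1) by rewrite divfK // gt_eqF // ltr_wpDl.
(* at -t, since s = t (c + 1), the quadratic equals - t^2 (c + 2) *)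
have t_le0 : t <= 0 by have := quad_ge0 (- t); rewrite s_eq; nra.
by apply/eqP; rewrite -dotvv_eq0 -/s s_eq eq_le mulr_ge0 ?addr_ge0 // andbT; nra.
Qed.

End Form.

Local Open Scope classical_set_scope.

Lemma unit_sphere_compact m : compact [set u : 'rV[R]_m | dotv u u = 1].
Proof.
apply: bounded_closed_compact.
  exists 1; split; first exact: num_real.
  move=> r r_gt1 u /= uu1; rewrite /Num.norm /= mx_normrE.
  apply: bigmax_le => [|[i j] _ /=]; first exact: le_trans (ltW r_gt1).
  rewrite [i]ord1 (le_trans _ (ltW r_gt1)) // -(expr_le1 (n := 2)) //.
  by rewrite real_normK ?num_real // -uu1 sqr_entry_le_dotvv.
have -> : [set u : 'rV[R]_m | dotv u u = 1] = qform 1%:M @^-1` [set 1].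
  by apply/seteqP; split => u /=; rewrite /qform mulmx1.
by apply: preimage_closed => [u _|]; [exact: qform_continuous | exact: closed_eq].
Qed.

Lemma eigenvalue_qform m (A : 'M[R]_m) a : eigenvalue A a ->
  exists2 v, v != 0 & qform A v = a * dotv v v.
Proof. by case/eigenvalueP => v vA v_neq0; exists v; rewrite // /qform vA dotvZl. Qed.

Lemma symmetric_max_eigenvalue n (A : 'M[R]_n.+1) : A^T = A ->
  exists2 a, eigenvalue A a & forall u, qform A u <= a * dotv u u.
Proof.
move=> A_sym; set S := [set u : 'rV[R]_n.+1 | dotv u u = 1].
have S_neq0 : S !=set0.
  exists (delta_mx 0 0); rewrite /S /= /dotv (bigD1 0) //= big1 ?addr0.
    by rewrite mxE eqxx mulr1.
  by move=> j j_neq0; rewrite mxE (negbTE j_neq0) andbF mul0r.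
have [u0 /[1!inE] u0_unit u0_max] := EVT_max_rV S_neq0 (@unit_sphere_compact n.+1)
  (continuous_subspaceT (@qform_continuous _ A)).
set a := qform A u0.
have qform_le u : qform A u <= a * dotv u u.
  have [->|u_neq0] := eqVneq u 0; first by rewrite /qform !dotv0r mulr0.
  have uu_gt0 : 0 < dotv u u by rewrite lt_def dotvv_eq0 u_neq0 dotvv_ge0.
  set s := norm2 u; have s_gt0 : 0 < s by rewrite /s norm2E sqrtr_gt0.
  have : s^-1 *: u \in S.
    rewrite inE /S /= dotvZl dotvZr mulrA -expr2 -norm2_sqr exprVn.
    by rewrite mulVf // gt_eqF // exprn_gt0.
  move=> /u0_max; rewrite qformZ exprVn ler_pdivrMl ?exprn_gt0 //.
  by rewrite /s norm2_sqr mulrC.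
exists a => //; apply/eigenvalueP; exists u0; last first.
  by apply: contra_eq_neq u0_unit => ->; rewrite dotv0r eq_sym oner_neq0.
(* the maximiser u0 lies in the kernel of the positive semidefinite a%:M - A *)
set B := a%:M - A.
have qformB u : qform B u = a * dotv u u - qform A u.
  by rewrite /qform /B mulmxBr mul_mx_scalar dotvBl dotvZl.
have /eqP : u0 *m B = 0.
  apply: psd_qform_eq0.
  - by rewrite linearB /= tr_scalar_mx A_sym.
  - by move=> u; rewrite qformB subr_ge0.
  - by rewrite qformB u0_unit mulr1 subrr.
by rewrite /B mulmxBr mul_mx_scalar subr_eq0 => /eqP <-.
Qed.

Lemma symmetric_lambda_max n (A : 'M[R]_n.+1) : A^T = A ->
  eigenvalue A (lambda_max A) /\ forall u, qform A u <= lambda_max A * dotv u u.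
Proof.
move=> /symmetric_max_eigenvalue[a a_eig qform_le].
have a_ub : ubound [set b | eigenvalue A b] a.
  move=> b /eigenvalue_qform[v v_neq0]; have := qform_le v => /[swap] ->.
  by rewrite ler_pM2r // lt_def dotvv_eq0 v_neq0 dotvv_ge0.
suff -> : lambda_max A = a by [].
apply/le_anti; rewrite ge_sup //=; last by exists a.
by apply: sup_upper_bound => //; split; [exists a | exists a].
Qed.

Lemma qform_le_lambda_max m (A : 'M[R]_m) u : A^T = A ->
  qform A u <= lambda_max A * dotv u u.
Proof.
case: m A u => [|n] A u A_sym; last by have [_] := symmetric_lambda_max A_sym; apply.
by rewrite (thinmx0 u) /qform !dotv0r mulr0.
Qed.

Lemma lambda_max_psd_ge0 m (A : 'M[R]_m) : A^T = A ->
  (forall u, 0 <= qform A u) -> 0 <= lambda_max A.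
Proof.
case: m A => [|n] A A_sym A_psd.
  rewrite /lambda_max (_ : [set a | _] = set0) ?sup0 //.
  by apply/seteqP; split => a // /eigenvalueP[v _]; rewrite (thinmx0 v) eqxx.
have [/eigenvalue_qform[v v_neq0 vAv] _] := symmetric_lambda_max A_sym.
by have := A_psd v; rewrite vAv pmulr_lge0 // lt_def dotvv_eq0 v_neq0 dotvv_ge0.
Qed.

Section Gram.
Variables (m n : nat) (B : 'M[R]_(m, n)).
Local Notation lmax := (lambda_max (B *m B^T)).

Lemma qform_gram u : qform (B *m B^T) u = dotv (u *m B) (u *m B).
Proof. by rewrite /qform !dotv_mulmx trmx_mul !mulmxA. Qed.

Lemma gram_sym : (B *m B^T)^T = B *m B^T.
Proof. by rewrite trmx_mul trmxK. Qed.

Lemma lambda_max_gram_ge0 : 0 <= lmax.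
Proof. by apply: lambda_max_psd_ge0 gram_sym _ => u; rewrite qform_gram dotvv_ge0. Qed.

Lemma norm2_mulmx_le u : norm2 (u *m B) <= Num.sqrt lmax * norm2 u.
Proof.
rewrite !norm2E -sqrtrM ?lambda_max_gram_ge0 //.
rewrite ler_sqrt ?mulr_ge0 ?dotvv_ge0 ?lambda_max_gram_ge0 //.
by rewrite -qform_gram qform_le_lambda_max // gram_sym.
Qed.

Lemma dotv_mulmx_tr v w : dotv (v *m B^T) w = dotv v (w *m B).
Proof. by rewrite !dotv_mulmx trmx_mul mulmxA. Qed.

Lemma norm2_mulmx_tr_le v : norm2 (v *m B^T) <= Num.sqrt lmax * norm2 v.
Proof.
set x := norm2 (v *m B^T); have x_ge0 : 0 <= x := norm2_ge0 _.
(* |v B^T|^2 = <v, v B^T B> <= |v| |v B^T B| <= |v| sqrt(lmax) |v B^T| *)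
have : x ^+ 2 <= norm2 v * (Num.sqrt lmax * x).
  rewrite norm2_sqr dotv_mulmx_tr (le_trans (dotv_le_norm2 _ _)) //.
  by rewrite ler_wpM2l ?norm2_ge0 ?norm2_mulmx_le.
have [->|x_neq0] := eqVneq x 0; first by rewrite mulr_ge0 ?sqrtr_ge0 ?norm2_ge0.
have x_gt0 : 0 < x by rewrite lt_def x_neq0.
by rewrite expr2; nra.
Qed.

End Gram.
End QuadraticForm.

Section SmoothedLoss.
Variables (R : realType) (L P : nat) (M : 'I_L -> nat).
Variables (y : forall l, 'I_(M l) -> R) (x : forall l, 'I_(M l) -> 'rV[R]_P) (tau : R).

Local Notation N := #|{: sample_idx M}|.
Local Notation X := (Xbar x).
Local Notation lmax := (lambda_max (X^T *m X)).

Lemma card_sample_idx : N = (\sum_(l < L) M l)%N.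
Proof. exact: tagnat.card. Qed.

Lemma sum_sample_idx (F : forall l, 'I_(M l) -> R) :
  \sum_(l < L) \sum_(i < M l) F l i = \sum_(c < N) F (tag (enum_val c)) (tagged (enum_val c)).
Proof.
rewrite (sig_big_dep xpredT (fun _ => xpredT) F) /=.
exact: (big_enum_val (fun p : sample_idx M => F (tag p) (tagged p))).
Qed.

Definition sample_resp : 'rV[R]_N := \row_(c < N) y (tagged (enum_val c)).

Definition resid (w : 'rV[R]_(P + 1)) : 'rV[R]_N := sample_resp - w *m X.

Definition grad_Gsum (w : 'rV[R]_(P + 1)) (mu : R) : 'rV[R]_(P + 1) :=
  (\row_c (- 2^-1 * dfsmooth (resid w 0 c) mu - (tau - 2^-1))) *m X^T.

Lemma GsumE w mu : Gsum tau y x w mu =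
  \sum_(c < N) (2^-1 * fsmooth (resid w 0 c) mu + (tau - 2^-1) * resid w 0 c).
Proof.
rewrite /Gsum /gtilde; under eq_bigr do rewrite !mulr_sumr -big_split.
rewrite sum_sample_idx; apply: eq_bigr => c _.
suff -> : resid w 0 c = y (tagged (enum_val c))
                        - dotv (xbar (x (tagged (enum_val c)))) w by [].
by rewrite /resid /dotv !mxE; congr (_ - _); apply: eq_bigr => j _; rewrite !mxE mulrC.
Qed.

Lemma resid_shift w h j c :
  resid (h *: delta_mx 0 j + w) 0 c = resid w 0 c - h * X j c.
Proof. by rewrite /resid mulmxDl -scalemxAl -rowE !mxE; ring. Qed.

Lemma grad_Gsum_entry w mu j : grad_Gsum w mu 0 j
  = \sum_(c < N) (- 2^-1 * dfsmooth (resid w 0 c) mu - (tau - 2^-1)) * X j c.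
Proof. by rewrite mxE; apply: eq_bigr => c _; rewrite mxE [X^T _ _]mxE. Qed.

Lemma grad_GsumE w mu : 0 < mu -> grad (fun v => Gsum tau y x v mu) w = grad_Gsum w mu.
Proof.
move=> mu_gt0; apply/rowP => j; rewrite grad_Gsum_entry mxE.
apply: (derive_quadratic_remainder (K := \sum_(c < N) X j c ^+ 2 / (4 * mu))) => h.
rewrite !GsumE mulr_sumr -!sumrB mulr_suml.
apply: le_trans (ler_norm_sum _ _ _) _; apply: ler_sum => c _.
rewrite resid_shift; set r := resid w 0 c; set b := X j c.
have -> : 2^-1 * fsmooth (r - h * b) mu + (tau - 2^-1) * (r - h * b)
          - (2^-1 * fsmooth r mu + (tau - 2^-1) * r)
          - h * ((- 2^-1 * dfsmooth r mu - (tau - 2^-1)) * b)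
        = 2^-1 * (fsmooth (r - h * b) mu - fsmooth r mu - dfsmooth r mu * (r - h * b - r)).
  by ring.
have -> : b ^+ 2 / (4 * mu) * h ^+ 2 = 2^-1 * ((r - h * b - r) ^+ 2 / (2 * mu)).
  by field; rewrite gt_eqF.
by rewrite normrM ger0_norm ?invr_ge0 // ler_pM2l ?invr_gt0 // fsmooth_taylor.
Qed.

Definition dfres (w : 'rV[R]_(P + 1)) (mu : R) : 'rV[R]_N :=
  \row_c dfsmooth (resid w 0 c) mu.

Lemma dfres_subE w w' mu mu' c :
  (dfres w' mu' - dfres w mu) 0 c = dfsmooth (resid w' 0 c) mu' - dfsmooth (resid w 0 c) mu.
Proof. by rewrite !mxE. Qed.

Lemma grad_Gsum_sub w w' mu mu' :
  grad_Gsum w' mu' - grad_Gsum w mu = (- 2^-1) *: ((dfres w' mu' - dfres w mu) *m X^T).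
Proof. by rewrite -mulmxBl scalemxAl; congr (_ *m _); apply/rowP => c; rewrite !mxE; ring. Qed.

Lemma resid_sub w w' : resid w' - resid w = - ((w' - w) *m X).
Proof. by rewrite /resid mulmxBl; apply/rowP => c; rewrite !mxE; ring. Qed.

Lemma resid_subE w w' c : resid w' 0 c - resid w 0 c = - ((w' - w) *m X) 0 c.
Proof.
have -> : resid w' 0 c - resid w 0 c = (resid w' - resid w) 0 c by rewrite !mxE.
by rewrite resid_sub mxE.
Qed.

Lemma lambda_max_Xbar_ge0 : 0 <= lmax.
Proof. by have := lambda_max_gram_ge0 X^T; rewrite trmxK. Qed.

Lemma norm2_mul_trXbar_le u : norm2 (u *m X^T) <= Num.sqrt lmax * norm2 u.
Proof. by have := norm2_mulmx_le X^T u; rewrite trmxK. Qed.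

Lemma norm2_mul_Xbar_le v : norm2 (v *m X) <= Num.sqrt lmax * norm2 v.
Proof. by have := norm2_mulmx_tr_le X^T v; rewrite !trmxK. Qed.

Lemma norm2_dfres_mu_le w mu1 mu2 : 0 < mu2 -> mu2 <= mu1 ->
  norm2 (dfres w mu2 - dfres w mu1) <= N%:R * ((mu1 - mu2) / mu2).
Proof. by move=> *; apply: norm2_le_dim => c; rewrite dfres_subE dfsmooth_mu_lipschitz. Qed.

Lemma norm2_dfres_w_le w w' mu : 0 < mu ->
  norm2 (dfres w' mu - dfres w mu) <= Num.sqrt lmax * norm2 (w' - w) / mu.
Proof.
move=> mu_gt0; have muV_ge0 : 0 <= mu^-1 by rewrite invr_ge0 ltW.
apply: (@le_trans _ _ (norm2 (mu^-1 *: ((w' - w) *m X)))).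
  apply: norm2_le_entrywise => c; rewrite dfres_subE [in leRHS]mxE.
  apply: le_trans (dfsmooth_lipschitz _ _ mu_gt0) _.
  by rewrite resid_subE normrN normrM (ger0_norm muV_ge0) mulrC.
by rewrite norm2Z ger0_norm // [_^-1 * _]mulrC ler_wpM2r // norm2_mul_Xbar_le.
Qed.

Lemma grad_Gsum_lipschitz w w' mu1 mu2 : 0 < mu2 -> mu2 <= mu1 ->
  norm2 (grad_Gsum w' mu2 - grad_Gsum w mu1)
  <= lmax / (2 * mu1) * norm2 (w' - w) + N%:R * Num.sqrt lmax / 2 * ((mu1 - mu2) / mu2).
Proof.
move=> mu2_gt0 mu21; have mu1_gt0 : 0 < mu1 := lt_le_trans mu2_gt0 mu21.
have -> : lmax / (2 * mu1) * norm2 (w' - w) + N%:R * Num.sqrt lmax / 2 * ((mu1 - mu2) / mu2)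
  = 2^-1 * (Num.sqrt lmax
             * (N%:R * ((mu1 - mu2) / mu2) + Num.sqrt lmax * norm2 (w' - w) / mu1)).
  by rewrite -[X in X / (2 * mu1)](sqr_sqrtr lambda_max_Xbar_ge0); field; rewrite !gt_eqF.
rewrite grad_Gsum_sub norm2Z normrN ger0_norm ?invr_ge0 // ler_pM2l ?invr_gt0 //.
have -> : dfres w' mu2 - dfres w mu1
          = (dfres w' mu2 - dfres w' mu1) + (dfres w' mu1 - dfres w mu1).
  by rewrite addrA subrK.
apply: le_trans (norm2_mul_trXbar_le _) (ler_wpM2l (sqrtr_ge0 _) _).
exact: le_trans (norm2D _ _) (lerD (norm2_dfres_mu_le _ _ _) (norm2_dfres_w_le _ _ _)).
Qed.

End SmoothedLoss.

Lemma mu_k_gt0 (R : realType) (beta d : R) k : 0 < beta -> 0 < mu_k beta d k.+1.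
Proof. by move=> beta_gt0; rewrite /mu_k divr_gt0 // powR_gt0 // ltr0n. Qed.

Lemma mu_k_le (R : realType) (beta d : R) j k : 0 < beta -> 0 <= d ->
  (0 < j <= k)%N -> mu_k beta d k <= mu_k beta d j.
Proof.
move=> beta_gt0 d_ge0 /andP[j_gt0 jk]; have k_gt0 := leq_trans j_gt0 jk.
rewrite /mu_k ler_pM2l // lef_pV2 ?posrE ?powR_gt0 ?ltr0n //.
by rewrite ge0_ler_powR ?nnegrE ?ler0n ?ler_nat.
Qed.

Theorem lemma4 (R : realType) (L P : nat) (M : 'I_L -> nat)
  (y : forall l, 'I_(M l) -> R) (x : forall l, 'I_(M l) -> 'rV[R]_P)
  (tau : R) (Htau : 0 < tau < 1)
  (pk : penalty_kind) (lam gam : R) (Hlam : 0 < lam) (Hgam : gamma_ok pk gam)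
  (c beta d : R) (Hc : 0 < c) (Hbeta : 0 < beta) (Hd : 0 < d < 1)
  (w : nat -> 'rV[R]_(P + 1))
  (Hmin : forall (k : nat) (v : 'rV[R]_(P + 1)),
     fspg_obj tau pk lam gam c beta d y x (w k) k (w k.+1)
     <= fspg_obj tau pk lam gam c beta d y x (w k) k v) :
  forall k : nat,
    let n := (\sum_(l < L) M l)%:R in
    let lmax := lambda_max ((Xbar x)^T *m Xbar x) in
    norm2 (grad (fun v => Gsum tau y x v (mu_k beta d k.+2)) (w k.+1)
           - grad (fun v => Gsum tau y x v (mu_k beta d k.+1)) (w k))
    <= lmax / (2 * mu_k beta d k.+1) * norm2 (w k.+1 - w k)
       + n * Num.sqrt lmax / 2
         * ((mu_k beta d k.+1 - mu_k beta d k.+2) / mu_k beta d k.+2).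
Proof.
(* only the smoothing schedule matters: the bound holds for any sequence w *)
move=> k; cbv zeta; have d_ge0 : 0 <= d by case/andP: Hd => /ltW.
rewrite !grad_GsumE ?mu_k_gt0 // -card_sample_idx.
by apply: grad_Gsum_lipschitz; [exact: mu_k_gt0 | apply: mu_k_le; rewrite //= leqnSn].
Qed.
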